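(* Let $T$ be a filtered deterministic transducer with input category $\mathcal{C}$, output category $\mathcal{D}$, structure functor $F$, primary input signature $X\to Y$, auxiliary input signatures $X_1\to Y_1,\dots,X_n\to Y_n$ and output signatures $X_1'\to Y_1',\dots,X_m'\to Y_m'$. Suppose the output state space $S(F(Y))$ is finite and every variable at every state of the input state space $S(F(X))$ has degree $ax+b$ with $a\ge 1$. For a primary input morphism $\alpha$ and auxiliary input morphisms $\beta_1,\dots,\beta_n$ put $\deg_m(\beta):=\max_{1\le i\le n}\deg(\beta_i)$. Then for every output signature $X_j'\to Y_j'$ there exist fixed integers $a_j^T,b_j^T,c_j^T$ such that, for any input state and any such inputs, the morphism $\gamma_j$ output for this signature satisfies $\deg(\gamma_j)\le a_j^T\deg(\alpha)+b_j^T\deg_m(\beta)+c_j^T$.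
   Context: A filtered-morphism category is a locally small symmetric monoidal (copy-discard) category in which every morphism $f$ has a degree $\deg(f)\in\mathbb{N}$, identities have degree $0$, and $\deg(g\circ f)\le\deg(g)+\deg(f)$. Linear polynomials $ax+b$ ($a,b\in\mathbb{N}$) are ordered by $ax+b\le cx+d$ iff $a\le c$ and $b\le d$. Given a filtered-morphism category $\mathcal{D}$ and signatures $X_i\to Y_i$ with degrees $a_ix+b_i$, the freely-generated $\mathbb{N}^2$-filtered category over $\mathcal{D}$ has the objects of $\mathcal{D}$ and morphisms built by composing/tensoring $\mathcal{D}$-morphisms with free generators $X_i\to Y_i$; its degree is the sum of the generator degrees $a_ix+b_i$ of all generator occurrences plus the $\mathcal{D}$-degrees of the $\mathcal{D}$-parts (as constants). The filtered state category $\mathcal{D}^S$: an object $A$ is a set $S(A)$ together with, for each $s\in S(A)$, a finite ordered list $V_A(s)$ of variables (pairs of $\mathcal{D}$-objects $X\to Y$) each with a degree $ax+b$. A morphism $f:A\to B$ of degree $\ell$ is a function $S(f):S(A)\to S(B)$ together with, for each $s$, an output function $V_f(s)$ assigning to each variable $X'\to Y'$ at $S(f)(s)$ of degree $a'x+b'$ a morphism $X'\to Y'$ in the free $\mathbb{N}^2$-filtered category over $\mathcal{D}$ generated by the variables at $s$, of degree at most $a'x+(a'\ell+b')$; substituting $\mathcal{D}$-morphisms for the generators produces outputs. Composition composes state maps and substitutes; the monoidal product takes products of state spaces and concatenates variable lists. A filtered functor satisfies $\deg F(\alpha)\le\deg\alpha$. A filtered deterministic transducer consists of filtered-morphism copy-discard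 categories $\mathcal{C},\mathcal{D}$, a primary input $\mathcal{C}$-signature $X\to Y$, auxiliary input $\mathcal{D}$-signatures $X_i\to Y_i$, output $\mathcal{D}$-signatures $X'_j\to Y'_j$, and a strong monoidal filtered functor $F:\mathcal{C}\to\mathcal{D}^S$ such that the variables at each $s\in S(F(X))$ are a prefix of the auxiliary signature list and the output signature list is a prefix of the variables at each $t\in S(F(Y))$. Given an input state $s\in S(F(X))$, primary input $\alpha:X\to Y$ and auxiliary inputs $\beta_i:X_i\to Y_i$, it outputs the state $S(F(\alpha))(s)$ and, for each output signature $X'_j\to Y'_j$, the morphism $\gamma_j$ assigned to it by $V_{F(\alpha)}(s)$ with each generator replaced by the corresponding $\beta_i$. *)

From HB Require Import structures.
From mathcomp Require Import all_boot all_order all_algebra.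
From Stdlib Require List.

Set Implicit Arguments.
Unset Strict Implicit.
Unset Printing Implicit Defensive.

Import Order.TTheory GRing.Theory Num.Theory.

(* 1. Filtered-morphism (symmetric monoidal, copy-discard) categories.        *)
(*    [comp g f] is  g o f.  Morphism equality is Leibniz equality in the     *)
(*    hom-types (locally small: hom-sets are types).                          *)

Record FCat := {
  ob : Type;
  hom : ob -> ob -> Type;
  idm : forall A, hom A A;
  comp : forall A B C, hom B C -> hom A B -> hom A C;
  tens : ob -> ob -> ob;
  tunit : ob;
  tensm : forall A B A' B', hom A A' -> hom B B' -> hom (tens A B) (tens A' B');
  alpha : forall A B C, hom (tens (tens A B) C) (tens A (tens B C));
  alphai : forall A B C, hom (tens A (tens B C)) (tens (tens A B) C);
  lam : forall A, hom (tens tunit A) A;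
  lami : forall A, hom A (tens tunit A);
  rho : forall A, hom (tens A tunit) A;
  rhoi : forall A, hom A (tens A tunit);
  sigma : forall A B, hom (tens A B) (tens B A);
  copy : forall A, hom A (tens A A);
  disc : forall A, hom A tunit;
  deg : forall A B, hom A B -> nat;
  comp_idl : forall A B (f : hom A B), comp (idm B) f = f;
  comp_idr : forall A B (f : hom A B), comp f (idm A) = f;
  compA : forall A B C E (f : hom A B) (g : hom B C) (h : hom C E),
      comp h (comp g f) = comp (comp h g) f;
  tensm_id : forall A B, tensm (idm A) (idm B) = idm (tens A B);
  tensm_comp : forall A B C A' B' C' (f : hom A B) (g : hom B C)
      (f' : hom A' B') (g' : hom B' C'),
      tensm (comp g f) (comp g' f') = comp (tensm g g') (tensm f f');
  alpha_iso1 : forall A B C, comp (alpha A B C) (alphai A B C) = idm _;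
  alpha_iso2 : forall A B C, comp (alphai A B C) (alpha A B C) = idm _;
  lam_iso1 : forall A, comp (lam A) (lami A) = idm _;
  lam_iso2 : forall A, comp (lami A) (lam A) = idm _;
  rho_iso1 : forall A, comp (rho A) (rhoi A) = idm _;
  rho_iso2 : forall A, comp (rhoi A) (rho A) = idm _;
  sigma_invol : forall A B, comp (sigma B A) (sigma A B) = idm _;
  alpha_nat : forall A B C A' B' C' (f : hom A A') (g : hom B B') (h : hom C C'),
      comp (alpha A' B' C') (tensm (tensm f g) h)
      = comp (tensm f (tensm g h)) (alpha A B C);
  lam_nat : forall A A' (f : hom A A'),
      comp (lam A') (tensm (idm tunit) f) = comp f (lam A);
  rho_nat : forall A A' (f : hom A A'),
      comp (rho A') (tensm f (idm tunit)) = comp f (rho A);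
  sigma_nat : forall A B A' B' (f : hom A A') (g : hom B B'),
      comp (sigma A' B') (tensm f g) = comp (tensm g f) (sigma A B);
  pentagon : forall A B C E,
      comp (alpha A B (tens C E)) (alpha (tens A B) C E)
      = comp (tensm (idm A) (alpha B C E))
          (comp (alpha A (tens B C) E) (tensm (alpha A B C) (idm E)));
  triangle : forall A B,
      comp (tensm (idm A) (lam B)) (alpha A tunit B) = tensm (rho A) (idm B);
  hexagon : forall A B C,
      comp (alpha B C A) (comp (sigma A (tens B C)) (alpha A B C))
      = comp (tensm (idm B) (sigma A C))
          (comp (alpha B A C) (tensm (sigma A B) (idm C)));
  copy_counitl : forall A, comp (lam A) (comp (tensm (disc A) (idm A)) (copy A)) = idm A;
  copy_counitr : forall A, comp (rho A) (comp (tensm (idm A) (disc A)) (copy A)) = idm A;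
  copy_coassoc : forall A,
      comp (alpha A A A) (comp (tensm (copy A) (idm A)) (copy A))
      = comp (tensm (idm A) (copy A)) (copy A);
  copy_cocomm : forall A, comp (sigma A A) (copy A) = copy A;
  copy_tens : forall A B,
      copy (tens A B)
      = comp (alphai A B (tens A B))
          (comp (tensm (idm A)
                   (comp (alpha B A B)
                      (comp (tensm (sigma A B) (idm B)) (alphai A B B))))
             (comp (alpha A A (tens B B)) (tensm (copy A) (copy B))));
  disc_tens : forall A B,
      disc (tens A B) = comp (lam tunit) (tensm (disc A) (disc B));
  disc_unit : disc tunit = idm tunit;
  deg_id : forall A, deg (idm A) = 0;
  deg_comp : forall A B C (f : hom A B) (g : hom B C),
      deg (comp g f) <= deg g + deg f;
  deg_tens : forall A B A' B' (f : hom A A') (g : hom B B'),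
      deg (tensm f g) <= deg f + deg g
}.

Arguments hom : clear implicits.
Arguments idm {_} A.
Arguments comp {_ A B C} _ _.
Arguments tensm {_ A B A' B'} _ _.
Arguments deg {_ A B} _.
Arguments tens {_} _ _.
Arguments tunit {_}.
Arguments alpha {_} A B C.
Arguments alphai {_} A B C.
Arguments lam {_} A.
Arguments lami {_} A.
Arguments rho {_} A.
Arguments rhoi {_} A.
Arguments sigma {_} A B.
Arguments copy {_} A.
Arguments disc {_} A.

(* 2. The free N^2-filtered category over D generated by a list of variables. *)
(*    A variable is a pair of D-objects X -> Y with a degree a x + b, coded   *)
(*    as ((X, Y), (a, b)).  Morphisms are terms built from D-morphisms and    *)
(*    generators by composition and tensor, modulo [teq]; the degree of a     *)
(*    term is the pair (x-coefficient, constant).                             *)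

Definition vsig (D : FCat) := ((ob D * ob D) * (nat * nat))%type.

Inductive term (D : FCat) (l : seq (vsig D)) : ob D -> ob D -> Type :=
| tD : forall A B, hom D A B -> term l A B
| tGen : forall (i : nat) (X Y : ob D) (a b : nat),
    onth l i = Some ((X, Y), (a, b)) -> term l X Y
| tComp : forall A B C, term l B C -> term l A B -> term l A C
| tTens : forall A B A' B', term l A A' -> term l B B' ->
    term l (tens A B) (tens A' B').

Arguments tD {D l A B} _.
Arguments tGen {D l} i {X Y a b} _.
Arguments tComp {D l A B C} _ _.
Arguments tTens {D l A B A' B'} _ _.

Fixpoint tdeg (D : FCat) (l : seq (vsig D)) A B (t : term l A B) : nat * nat :=
  match t with
  | tD _ _ f => (0, deg f)
  | @tGen _ _ _ _ _ a b _ => (a, b)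
  | tComp _ _ _ u v => ((tdeg u).1 + (tdeg v).1, (tdeg u).2 + (tdeg v).2)
  | tTens _ _ _ _ u v => ((tdeg u).1 + (tdeg v).1, (tdeg u).2 + (tdeg v).2)
  end.

Inductive teq (D : FCat) (l : seq (vsig D)) : forall A B, term l A B -> term l A B -> Prop :=
| teq_refl A B (t : term l A B) : teq t t
| teq_sym A B (t u : term l A B) : teq t u -> teq u t
| teq_trans A B (t u v : term l A B) : teq t u -> teq u v -> teq t v
| teq_comp A B C (t t' : term l B C) (u u' : term l A B) :
    teq t t' -> teq u u' -> teq (tComp t u) (tComp t' u')
| teq_tens A B A' B' (t t' : term l A A') (u u' : term l B B') :
    teq t t' -> teq u u' -> teq (tTens t u) (tTens t' u')
| teq_idl A B (t : term l A B) : teq (tComp (tD (idm B)) t) t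
| teq_idr A B (t : term l A B) : teq (tComp t (tD (idm A))) t
| teq_assoc A B C E (t : term l C E) (u : term l B C) (v : term l A B) :
    teq (tComp t (tComp u v)) (tComp (tComp t u) v)
| teq_Dcomp A B C (g : hom D B C) (f : hom D A B) :
    teq (tComp (tD g) (tD f)) (tD (comp g f))
| teq_Dtens A B A' B' (f : hom D A A') (g : hom D B B') :
    teq (tTens (tD f) (tD g)) (tD (tensm f g))
| teq_tens_comp A B C A' B' C' (t : term l B C) (u : term l A B)
    (t' : term l B' C') (u' : term l A' B') :
    teq (tTens (tComp t u) (tComp t' u')) (tComp (tTens t t') (tTens u u'))
| teq_alpha_nat A B C A' B' C' (t : term l A A') (u : term l B B') (v : term l C C') :
    teq (tComp (tD (alpha A' B' C')) (tTens (tTens t u) v))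
        (tComp (tTens t (tTens u v)) (tD (alpha A B C)))
| teq_lam_nat A A' (t : term l A A') :
    teq (tComp (tD (lam A')) (tTens (tD (idm tunit)) t)) (tComp t (tD (lam A)))
| teq_rho_nat A A' (t : term l A A') :
    teq (tComp (tD (rho A')) (tTens t (tD (idm tunit)))) (tComp t (tD (rho A)))
| teq_sigma_nat A B A' B' (t : term l A A') (u : term l B B') :
    teq (tComp (tD (sigma A' B')) (tTens t u)) (tComp (tTens u t) (tD (sigma A B))).

Definition tsub (D : FCat) (l l' : seq (vsig D)) :=
  forall i X Y a b, onth l i = Some ((X, Y), (a, b)) -> term l' X Y.

Fixpoint tsubst (D : FCat) (l l' : seq (vsig D)) (s : tsub l l') A B
    (t : term l A B) : term l' A B :=
  match t with
  | tD _ _ f => tD f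
  | @tGen _ _ i _ _ _ _ H => s i _ _ _ _ H
  | tComp _ _ _ u v => tComp (tsubst s u) (tsubst s v)
  | tTens _ _ _ _ u v => tTens (tsubst s u) (tsubst s v)
  end.

Definition asg (D : FCat) (l : seq (vsig D)) :=
  forall i X Y a b, onth l i = Some ((X, Y), (a, b)) -> hom D X Y.

Fixpoint interp (D : FCat) (l : seq (vsig D)) (b : asg l) A B
    (t : term l A B) : hom D A B :=
  match t with
  | tD _ _ f => f
  | @tGen _ _ i _ _ _ _ H => b i _ _ _ _ H
  | tComp _ _ _ u v => comp (interp b u) (interp b v)
  | tTens _ _ _ _ u v => tensm (interp b u) (interp b v)
  end.

(* 3. The filtered state category D^S.                                        *)

Record DSob (D : FCat) := { st : Type; vars : st -> seq (vsig D) }.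
Arguments st {D} _.
Arguments vars {D} _ _.

Record DShom (D : FCat) (A B : DSob D) := {
  smap : st A -> st B;
  vout : forall s i X Y a b,
      onth (vars B (smap s)) i = Some ((X, Y), (a, b)) -> term (vars A s) X Y
}.

Arguments smap {D A B} _ _.
Arguments vout {D A B} _ s {i X Y a b} _.

Definition ds_has_deg (D : FCat) (A B : DSob D) (f : DShom A B) (l : nat) : Prop :=
  forall s i X Y a b (H : onth (vars B (smap f s)) i = Some ((X, Y), (a, b))),
    (tdeg (vout f s H)).1 <= a /\ (tdeg (vout f s H)).2 <= a * l + b.

Definition ds_mor (D : FCat) (A B : DSob D) (f : DShom A B) : Prop :=
  exists l, ds_has_deg f l.

(* equality of D^S-morphisms: same state map and equal outputs in the free category *)
Definition ds_eq (D : FCat) (A B : DSob D) (f g : DShom A B) : Prop :=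
  forall s, exists E : smap f s = smap g s,
    forall i X Y a b (H : onth (vars B (smap f s)) i = Some ((X, Y), (a, b))),
      teq (vout f s H)
          (vout g s (eq_ind (smap f s)
                      (fun t => onth (vars B t) i = Some ((X, Y), (a, b))) H _ E)).

Definition ds_id (D : FCat) (A : DSob D) : DShom A A :=
  {| smap := id; vout := fun s i X Y a b H => tGen i H |}.

Definition ds_comp (D : FCat) (A B C : DSob D) (g : DShom B C) (f : DShom A B)
  : DShom A C :=
  {| smap := fun s => smap g (smap f s);
     vout := fun s i X Y a b H =>
       tsubst (fun j X' Y' a' b' H' => vout f s H') (vout g (smap f s) H) |}.

Definition ds_tens_ob (D : FCat) (A B : DSob D) : DSob D :=
  {| st := (st A * st B)%type; vars := fun p => vars A p.1 ++ vars B p.2 |}.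

Definition ds_unit (D : FCat) : DSob D :=
  {| st := unit; vars := fun _ => [::] |}.

Lemma onth_catl T (l1 l2 : seq T) i x : onth l1 i = Some x -> onth (l1 ++ l2) i = Some x.
Proof.
move=> H; rewrite onth_cat; case: ltnP => // hi.
by rewrite onth_default in H.
Qed.

Lemma onth_catr T (l1 l2 : seq T) i x : onth l2 i = Some x ->
  onth (l1 ++ l2) (size l1 + i) = Some x.
Proof. by move=> H; rewrite onth_cat ltnNge leq_addr /= addKn. Qed.

Definition onth_split T (l1 l2 : seq T) i x (H : onth (l1 ++ l2) i = Some x) :
  (onth l1 i = Some x) + (onth l2 (i - size l1) = Some x).
Proof.
case h: (i < size l1); [left | right]; by rewrite onth_cat h in H.
Defined.

Definition ds_tens (D : FCat) (A B A' B' : DSob D) (f : DShom A A') (g : DShom B B')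
  : DShom (ds_tens_ob A B) (ds_tens_ob A' B') :=
  @Build_DShom D (ds_tens_ob A B) (ds_tens_ob A' B')
    (fun p : st A * st B => (smap f p.1, smap g p.2))
    (fun (p : st A * st B) i X Y a b H =>
       match onth_split H with
       | inl H1 => tsubst (fun j X' Y' a' b' H' => tGen j (onth_catl (vars B p.2) H'))
                          (vout f p.1 H1)
       | inr H2 => tsubst (fun j X' Y' a' b' H' =>
                             tGen (size (vars A p.1) + j) (onth_catr (vars A p.1) H'))
                          (vout g p.2 H2)
       end).

Lemma onth_catA T (l1 l2 l3 : seq T) i x :
  onth (l1 ++ (l2 ++ l3)) i = Some x -> onth ((l1 ++ l2) ++ l3) i = Some x.
Proof. by rewrite catA. Qed.

Lemma onth_cats0 T (l : seq T) i x : onth l i = Some x -> onth (l ++ [::]) i = Some x.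
Proof. by rewrite cats0. Qed.

Definition ds_alpha (D : FCat) (A B C : DSob D)
  : DShom (ds_tens_ob (ds_tens_ob A B) C) (ds_tens_ob A (ds_tens_ob B C)) :=
  @Build_DShom D (ds_tens_ob (ds_tens_ob A B) C) (ds_tens_ob A (ds_tens_ob B C))
    (fun p : (st A * st B) * st C => (p.1.1, (p.1.2, p.2)))
    (fun (p : (st A * st B) * st C) i X Y a b H => tGen i (onth_catA H)).

Definition ds_lam (D : FCat) (A : DSob D) : DShom (ds_tens_ob (ds_unit D) A) A :=
  @Build_DShom D (ds_tens_ob (ds_unit D) A) A
    (fun p : unit * st A => p.2) (fun (p : unit * st A) i X Y a b H => tGen i H).

Definition ds_rho (D : FCat) (A : DSob D) : DShom (ds_tens_ob A (ds_unit D)) A :=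
  @Build_DShom D (ds_tens_ob A (ds_unit D)) A
    (fun p : st A * unit => p.1)
    (fun (p : st A * unit) i X Y a b H => tGen i (onth_cats0 H)).

(* 4. Strong monoidal filtered functors C -> D^S.                             *)

Record SMFFunctor (C D : FCat) := {
  Fob : ob C -> DSob D;
  Fhom : forall A B, hom C A B -> DShom (Fob A) (Fob B);
  F_filtered : forall A B (f : hom C A B), ds_has_deg (Fhom f) (deg f);
  F_id : forall A, ds_eq (Fhom (idm A)) (ds_id (Fob A));
  F_comp : forall A B E (f : hom C A B) (g : hom C B E),
      ds_eq (Fhom (comp g f)) (ds_comp (Fhom g) (Fhom f));
  Fphi : forall A B, DShom (ds_tens_ob (Fob A) (Fob B)) (Fob (tens A B));
  Fphii : forall A B, DShom (Fob (tens A B)) (ds_tens_ob (Fob A) (Fob B));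
  Fphi0 : DShom (ds_unit D) (Fob tunit);
  Fphi0i : DShom (Fob tunit) (ds_unit D);
  Fphi_mor : forall A B, ds_mor (Fphi A B) /\ ds_mor (Fphii A B);
  Fphi0_mor : ds_mor Fphi0 /\ ds_mor Fphi0i;
  Fphi_iso : forall A B, ds_eq (ds_comp (Fphii A B) (Fphi A B)) (ds_id _)
                      /\ ds_eq (ds_comp (Fphi A B) (Fphii A B)) (ds_id _);
  Fphi0_iso : ds_eq (ds_comp Fphi0i Fphi0) (ds_id _)
           /\ ds_eq (ds_comp Fphi0 Fphi0i) (ds_id _);
  Fphi_nat : forall A B A' B' (f : hom C A A') (g : hom C B B'),
      ds_eq (ds_comp (Fhom (tensm f g)) (Fphi A B))
            (ds_comp (Fphi A' B') (ds_tens (Fhom f) (Fhom g)));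
  F_assoc : forall A B E,
      ds_eq (ds_comp (Fhom (alpha A B E))
                     (ds_comp (Fphi (tens A B) E) (ds_tens (Fphi A B) (ds_id (Fob E)))))
            (ds_comp (Fphi A (tens B E))
                     (ds_comp (ds_tens (ds_id (Fob A)) (Fphi B E))
                              (ds_alpha (Fob A) (Fob B) (Fob E))));
  F_lunit : forall A,
      ds_eq (ds_comp (Fhom (lam A)) (ds_comp (Fphi tunit A) (ds_tens Fphi0 (ds_id (Fob A)))))
            (ds_lam (Fob A));
  F_runit : forall A,
      ds_eq (ds_comp (Fhom (rho A)) (ds_comp (Fphi A tunit) (ds_tens (ds_id (Fob A)) Fphi0)))
            (ds_rho (Fob A))
}.

Arguments Fob {C D} _ _.
Arguments Fhom {C D} _ {A B} _.

(* 5. Filtered deterministic transducers.                                      *)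

Definition is_prefix T (l1 l2 : seq T) : Prop := exists l3, l2 = l1 ++ l3.

Definition sig_of (D : FCat) (v : vsig D) : ob D * ob D := v.1.

Record FDT := {
  Tin : FCat;
  Tout : FCat;
  TX : ob Tin;  TY : ob Tin;
  Taux : seq (ob Tout * ob Tout);
  Touts : seq (ob Tout * ob Tout);
  TF : SMFFunctor Tin Tout;
  T_aux_prefix : forall s : st (Fob TF TX),
      is_prefix (map (@sig_of Tout) (vars (Fob TF TX) s)) Taux;
  T_out_prefix : forall t : st (Fob TF TY),
      is_prefix Touts (map (@sig_of Tout) (vars (Fob TF TY) t))
}.

Definition aux_inputs (T : FDT) :=
  forall i : 'I_(size (Taux T)),
    hom (Tout T) (nth (tunit, tunit) (Taux T) i).1 (nth (tunit, tunit) (Taux T) i).2.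

Definition degm (T : FDT) (beta : aux_inputs T) : nat :=
  \max_(i < size (Taux T)) deg (beta i).

Lemma aux_var_lt (T : FDT) (s : st (Fob (TF T) (TX T))) i X Y a b :
  onth (vars (Fob (TF T) (TX T)) s) i = Some ((X, Y), (a, b)) -> i < size (Taux T).
Proof.
move=> H; have [l3 E] := T_aux_prefix s.
rewrite E size_cat size_map; apply: leq_trans (leq_addr _ _).
by rewrite -onthTE H.
Qed.

Lemma aux_var_sig (T : FDT) (s : st (Fob (TF T) (TX T))) i X Y a b :
  onth (vars (Fob (TF T) (TX T)) s) i = Some ((X, Y), (a, b)) ->
  nth (tunit, tunit) (Taux T) i = (X, Y).
Proof.
move=> H; have [l3 E] := T_aux_prefix s.
rewrite E nth_cat size_map -onthTE H /= (nth_map ((tunit, tunit), (0, 0))).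
  by rewrite (@onth_nth _ ((tunit, tunit), (0, 0)) _ _ _ H).
by rewrite -onthTE H.
Qed.

Definition aux_asg (T : FDT) (beta : aux_inputs T) (s : st (Fob (TF T) (TX T)))
  : asg (vars (Fob (TF T) (TX T)) s) :=
  fun i X Y a b H =>
    let e := aux_var_sig H in
    eq_rect _ (fun p => hom (Tout T) p.1 p.2)
            (beta (Ordinal (aux_var_lt H))) _ e.

Arguments aux_asg {T} beta s _ _ _ _ _ _.

Definition T_output (T : FDT) (s : st (Fob (TF T) (TX T))) (al : hom (Tin T) (TX T) (TY T))
    (beta : aux_inputs T) j X Y a b
    (H : onth (vars (Fob (TF T) (TY T)) (smap (Fhom (TF T) al) s)) j = Some ((X, Y), (a, b)))
  : hom (Tout T) X Y :=
  interp (aux_asg beta s) (vout (Fhom (TF T) al) s H).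

Definition finite_type (S : Type) : Prop := exists e : seq S, forall x : S, List.In x e.

Arguments T_output {T s al} beta {j X Y a b} H.

(* The output gamma_j is the auxiliary inputs substituted into the term that
   F(alpha) assigns to the j-th output variable.  Evaluating a term whose
   degree is (p, q) at morphisms of degree at most d gives degree at most
   p d + q; since every input variable has x-coefficient at least 1, each
   beta_i qualifies with d = deg_m(beta).  Filteredness of F bounds (p, q) by
   (a, a deg(alpha) + b), where a x + b is the degree of the output variable,
   and finiteness of S(F(Y)) bounds a and b uniformly. *)
From Pilot Require Import Defs.
From HB Require Import structures.
From mathcomp Require Import all_boot all_order all_algebra.
From mathcomp Require Import zify.
Import Order.TTheory GRing.Theory Num.Theory.
Import Pilot.Defs.

Set Implicit Arguments.
Unset Strict Implicit.
Unset Printing Implicit Defensive.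

Lemma deg_interp_le (D : FCat) (l : seq (vsig D)) (bt : asg l) (d : nat) :
  (forall i X Y a b (H : onth l i = Some ((X, Y), (a, b))),
      deg (bt i X Y a b H) <= a * d + b) ->
  forall A B (t : term l A B), deg (interp bt t) <= (tdeg t).1 * d + (tdeg t).2.
Proof.
move=> bt_le A B; elim=> //= [A0 B0 C0 | A0 B0 A1 B1] u IHu v IHv.
- by apply: leq_trans (deg_comp _ _) _; lia.
- by apply: leq_trans (deg_tens _ _) _; lia.
Qed.

Lemma deg_cast (D : FCat) (p q : ob D * ob D) (e : p = q) (f : hom D p.1 p.2) :
  deg (eq_rect p (fun p => hom D p.1 p.2) f q e) = deg f.
Proof. by case: q / e. Qed.

Lemma deg_aux_asg_le (T : FDT) (beta : aux_inputs T) (s : st (Fob (TF T) (TX T)))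
    i X Y a b (H : onth (vars (Fob (TF T) (TX T)) s) i = Some ((X, Y), (a, b))) :
  deg (aux_asg beta s i X Y a b H) <= degm beta.
Proof.
rewrite /aux_asg (leq_trans (eq_leq (deg_cast (aux_var_sig H) _))) //.
exact: (@leq_bigmax _ (fun k => deg (beta k)) (Ordinal (aux_var_lt H))).
Qed.

Lemma deg_T_output_le (T : FDT) :
  (forall s i X Y a b,
      onth (vars (Fob (TF T) (TX T)) s) i = Some ((X, Y), (a, b)) -> 0 < a) ->
  forall s (al : hom (Tin T) (TX T) (TY T)) (beta : aux_inputs T) j X Y a b
    (H : onth (vars (Fob (TF T) (TY T)) (smap (Fhom (TF T) al) s)) j
         = Some ((X, Y), (a, b))),
  deg (T_output beta H) <= a * deg al + a * degm beta + b.
Proof.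
move=> in_deg_pos s al beta j X Y a b H.
have [deg1_le deg2_le] := F_filtered H.
have aux_le : forall i X0 Y0 a0 b0 (H0 : onth _ i = Some ((X0, Y0), (a0, b0))),
    deg (aux_asg beta s i X0 Y0 a0 b0 H0) <= a0 * degm beta + b0.
  move=> i X0 Y0 a0 b0 H0; have := in_deg_pos _ _ _ _ _ _ H0.
  have := deg_aux_asg_le beta H0; nia.
have := deg_interp_le aux_le (vout (Fhom (TF T) al) s H).
rewrite -/(T_output beta H); nia.
Qed.

Lemma finite_type_bounded (S : Type) (f : S -> nat) :
  finite_type S -> exists M, forall x, f x <= M.
Proof.
case=> e e_full; exists (\max_(y <- e) f y) => x.
have := e_full x; elim: e {e_full} => //= y e IH [-> | x_in_e].
  by rewrite big_cons leq_maxl.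
by rewrite big_cons (leq_trans (IH x_in_e)) ?leq_maxr.
Qed.

Lemma var_deg_bounded (D : FCat) (P : DSob D) (j : nat) :
  finite_type (st P) ->
  exists A B, forall t X Y a b,
    onth (vars P t) j = Some ((X, Y), (a, b)) -> a <= A /\ b <= B.
Proof.
move=> P_fin; pose vdeg t := odflt (0, 0) (omap snd (onth (vars P t) j)).
have [A leA] := finite_type_bounded (fun t => (vdeg t).1) P_fin.
have [B leB] := finite_type_bounded (fun t => (vdeg t).2) P_fin.
exists A, B => t X Y a b Ht.
by have := leA t; have := leB t; rewrite /vdeg Ht.
Qed.

Theorem proposition3p12 (T : FDT) :
  (* the output state space S(F(Y)) is finite *)
  finite_type (st (Fob (TF T) (TY T))) ->
  (* every variable at every input state has degree a x + b with a >= 1 *)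
  (forall (s : st (Fob (TF T) (TX T))) (i : nat) (X Y : ob (Tout T)) (a b : nat),
      onth (vars (Fob (TF T) (TX T)) s) i = Some ((X, Y), (a, b)) -> (1 <= a)%N) ->
  forall j : 'I_(size (Touts T)),
  exists aT bT cT : int,
    forall (s : st (Fob (TF T) (TX T))) (al : hom (Tin T) (TX T) (TY T))
      (beta : aux_inputs T) (X Y : ob (Tout T)) (a b : nat)
      (H : onth (vars (Fob (TF T) (TY T)) (smap (Fhom (TF T) al) s)) j
           = Some ((X, Y), (a, b))),
      ((deg (T_output beta H))%:Z
         <= aT * (deg al)%:Z + bT * (degm beta)%:Z + cT)%R.
Proof.
move=> out_fin in_deg_pos j.
have [A [B out_deg_le]] := var_deg_bounded j out_fin.
exists A, A, B => s al beta X Y a b H.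
have [le_aA le_bB] := out_deg_le _ _ _ _ _ H.
have := deg_T_output_le in_deg_pos beta H.
rewrite -!PoszM -!PoszD lez_nat; nia.
Qed.
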